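(* Each of the following six sets is a rational Diophantine sextuple, i.e. consists of six distinct positive rational numbers such that for any two distinct elements $x,y$ of the set, $xy+1$ is the square of a rational number: $$\left\{\tfrac{17}{448},\ \tfrac{265}{448},\ \tfrac{2145}{448},\ 252,\ \tfrac{23460}{7},\ \tfrac{2352}{7921}\right\},$$ $$\left\{\tfrac{9}{44},\ \tfrac{91}{132},\ \tfrac{60}{11},\ \tfrac{44}{3},\ \tfrac{1265}{12},\ \tfrac{4420}{3993}\right\},$$ $$\left\{\tfrac{3}{80},\ \tfrac{55}{16},\ \tfrac{28}{5},\ \tfrac{1683}{80},\ 1680,\ \tfrac{2220}{6889}\right\},$$ $$\left\{\tfrac{47}{60},\ \tfrac{287}{240},\ \tfrac{225}{64},\ \tfrac{1463}{60},\ \tfrac{512}{15},\ \tfrac{225}{1156}\right\},$$ $$\left\{\tfrac{27}{1856},\ \tfrac{2065}{5568},\ \tfrac{116}{3},\ \tfrac{23693}{192},\ \tfrac{12880}{87},\ \tfrac{21420}{229709}\right\},$$ $$\left\{\tfrac{21}{352},\ \tfrac{237}{352},\ \tfrac{280}{33},\ \tfrac{1573}{96},\ \tfrac{4680}{11},\ \tfrac{398090}{236883}\right\}.$$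
   Context: A rational Diophantine $m$-tuple is a set of $m$ distinct positive rational numbers such that the product of any two distinct elements, plus $1$, is the square of a rational number. A sextuple is the case $m=6$. *)

From mathcomp Require Import all_boot all_order all_algebra.
Set Implicit Arguments. Unset Strict Implicit. Unset Printing Implicit Defensive.
Import Order.TTheory GRing.Theory Num.Theory.
Local Open Scope ring_scope.

Definition is_rat_square (q : rat) : Prop := exists r : rat, r ^+ 2 = q.

Definition rat_diophantine_tuple (m : nat) (s : seq rat) : Prop :=
  [/\ size s = m, uniq s, all (fun x => 0 < x) s &
      forall x y, x \in s -> y \in s -> x != y -> is_rat_square (x * y + 1)].

Definition rat_diophantine_sextuple (s : seq rat) : Prop :=
  rat_diophantine_tuple 6 s.

(* Binary-encoded positive numerals mapped into rat, so that large numerals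
   such as 229709 do not have to be parsed as unary nat terms (which
   overflows the stack). [Qpos p] is the rational number equal to the
   positive integer p. *)
From Stdlib Require Import PArith.
Fixpoint Qpos (p : positive) : rat :=
  match p with
  | xH => 1
  | xO q => 2 * Qpos q
  | xI q => 2 * Qpos q + 1
  end.

Definition qfrac (a b : positive) : rat := Qpos a / Qpos b.

(* Writing each element as a/b with a, b binary positive integers, two
   fractions are equal iff their cross products agree, and
   (a/b)(c/d) + 1 = (ac + bd)/(bd) is the square of e/(bd) as soon as
   e^2 = (ac + bd) bd, a perfect-square test that [Pos.sqrt] decides.  So every
   condition on the six sets reduces to integer arithmetic, which the kernel
   evaluates. *)

From HB Require Import structures.
From mathcomp Require Import all_boot all_order all_algebra.
From mathcomp Require Import ring.
From Stdlib Require Import PArith.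
Import Order.TTheory GRing.Theory Num.Theory.
Local Open Scope ring_scope.

HB.instance Definition _ := hasDecEq.Build positive Pos.eqb_spec.

Lemma Qpos_natE p : Qpos p = (Pos.to_nat p)%:R.
Proof.
elim: p => [p IHp|p IHp|] //=; rewrite IHp.
- by rewrite Pos2Nat.inj_xI multE -[RHS]natr1 natrM.
- by rewrite Pos2Nat.inj_xO multE natrM.
Qed.

Lemma QposD p q : Qpos (p + q) = Qpos p + Qpos q.
Proof. by rewrite !Qpos_natE Pos2Nat.inj_add natrD. Qed.

Lemma QposM p q : Qpos (p * q) = Qpos p * Qpos q.
Proof. by rewrite !Qpos_natE Pos2Nat.inj_mul natrM. Qed.

Lemma Qpos_gt0 p : 0 < Qpos p.
Proof. by rewrite Qpos_natE ltr0n; apply/ssrnat.ltP/Pos2Nat.is_pos. Qed.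

Lemma Qpos_neq0 p : Qpos p != 0.
Proof. exact: lt0r_neq0 (Qpos_gt0 p). Qed.

Lemma Qpos_inj : injective Qpos.
Proof. by move=> p q; rewrite !Qpos_natE => /eqP; rewrite eqr_nat => /eqP/Pos2Nat.inj. Qed.

Lemma qfrac_gt0 a b : 0 < qfrac a b.
Proof. exact: divr_gt0 (Qpos_gt0 a) (Qpos_gt0 b). Qed.

Lemma eq_qfrac a b c d : (qfrac a b == qfrac c d) = (a * d == c * b)%positive.
Proof.
rewrite /qfrac eqr_div ?Qpos_neq0 // -!QposM.
by apply/eqP/eqP => [/Qpos_inj | ->].
Qed.

Lemma qfrac_mul_add1 a b c d :
  qfrac a b * qfrac c d + 1 = qfrac (a * c + b * d) (b * d).
Proof. by rewrite /qfrac QposD !QposM; field; rewrite !Qpos_neq0. Qed.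

Lemma qfrac_square a b e : (e * e = a * b)%positive -> is_rat_square (qfrac a b).
Proof.
move=> /(congr1 Qpos); rewrite !QposM => eab.
exists (Qpos e / Qpos b).
by rewrite expr2 mulf_div eab /qfrac; field; apply: Qpos_neq0.
Qed.

Definition pos_square (n : positive) : bool := (Pos.sqrt n * Pos.sqrt n == n)%positive.

Definition pfrac := (positive * positive)%type.

Definition ratp (x : pfrac) : rat := qfrac x.1 x.2.

Definition pfrac_eq (x y : pfrac) : bool := (x.1 * y.2 == y.1 * x.2)%positive.

Definition pfrac_mul_add1_square (x y : pfrac) : bool :=
  pos_square ((x.1 * y.1 + x.2 * y.2) * (x.2 * y.2)).

Lemma pfrac_eqE x y : pfrac_eq x y = (ratp x == ratp y).
Proof. by rewrite /ratp eq_qfrac. Qed.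

Lemma pfrac_mul_add1_squareP x y :
  pfrac_mul_add1_square x y -> is_rat_square (ratp x * ratp y + 1).
Proof. by move=> /eqP; rewrite /ratp qfrac_mul_add1; apply: qfrac_square. Qed.

Definition diophantine_tupleb (m : nat) (L : seq pfrac) : bool :=
  [&& size L == m, pairwise (fun x y => ~~ pfrac_eq x y) L &
      all2rel (fun x y => pfrac_eq x y || pfrac_mul_add1_square x y) L].

Lemma diophantine_tuplebP m L :
  diophantine_tupleb m L -> rat_diophantine_tuple m (map ratp L).
Proof.
case/and3P => /eqP sizeL distinctL squaresL; split.
- by rewrite size_map.
- rewrite uniq_pairwise pairwise_map.
  by apply: sub_pairwise distinctL => x y /=; rewrite pfrac_eqE.
- by apply/allP => _ /mapP[x _ ->]; apply: qfrac_gt0.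
- move=> _ _ /mapP[x xL ->] /mapP[y yL ->]; rewrite -pfrac_eqE => /negbTE xy.
  by have /allrelP/(_ x y xL yL) := squaresL; rewrite xy => /pfrac_mul_add1_squareP.
Qed.

Local Open Scope positive_scope.

Theorem mainTheorem2 :
  rat_diophantine_sextuple
    [:: qfrac 17 448; qfrac 265 448; qfrac 2145 448; qfrac 252 1;
        qfrac 23460 7; qfrac 2352 7921] /\
  rat_diophantine_sextuple
    [:: qfrac 9 44; qfrac 91 132; qfrac 60 11; qfrac 44 3;
        qfrac 1265 12; qfrac 4420 3993] /\
  rat_diophantine_sextuple
    [:: qfrac 3 80; qfrac 55 16; qfrac 28 5; qfrac 1683 80;
        qfrac 1680 1; qfrac 2220 6889] /\
  rat_diophantine_sextuple
    [:: qfrac 47 60; qfrac 287 240; qfrac 225 64; qfrac 1463 60;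
        qfrac 512 15; qfrac 225 1156] /\
  rat_diophantine_sextuple
    [:: qfrac 27 1856; qfrac 2065 5568; qfrac 116 3; qfrac 23693 192;
        qfrac 12880 87; qfrac 21420 229709] /\
  rat_diophantine_sextuple
    [:: qfrac 21 352; qfrac 237 352; qfrac 280 33; qfrac 1573 96;
        qfrac 4680 11; qfrac 398090 236883].
Proof.
split; [|split; [|split; [|split; [|split]]]].
- exact: (@diophantine_tuplebP 6
    [:: (17,448); (265,448); (2145,448); (252,1); (23460,7); (2352,7921)] erefl).
- exact: (@diophantine_tuplebP 6
    [:: (9,44); (91,132); (60,11); (44,3); (1265,12); (4420,3993)] erefl).
- exact: (@diophantine_tuplebP 6
    [:: (3,80); (55,16); (28,5); (1683,80); (1680,1); (2220,6889)] erefl).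
- exact: (@diophantine_tuplebP 6
    [:: (47,60); (287,240); (225,64); (1463,60); (512,15); (225,1156)] erefl).
- exact: (@diophantine_tuplebP 6
    [:: (27,1856); (2065,5568); (116,3); (23693,192); (12880,87); (21420,229709)] erefl).
- exact: (@diophantine_tuplebP 6
    [:: (21,352); (237,352); (280,33); (1573,96); (4680,11); (398090,236883)] erefl).
Qed.
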